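(* Let $G/\Gamma$ be a nilmanifold with filtration $(G_i)$, let $g\in\mathrm{poly}(\mathbb Z^\ell,G)$ with $g(0)=\mathrm{id}_G$, and let $\vec h\in\mathbb Z^\ell$. Define \[g_{\vec h}(\vec n)=\big(\{g_{\mathrm{lin}}(\vec h)\}^{-1}g_2(\vec n+\vec h)g_{\mathrm{lin}}(\vec n+\vec h)[g_{\mathrm{lin}}(\vec h)]^{-1},\ g(\vec n)\big).\] Then $g_{\vec h}\in\mathrm{poly}(\mathbb Z^\ell,G^\square)$, where $G^\square$ carries the filtration $(G^\square)_0=(G^\square)_1=G^\square$ and $(G^\square)_i=G_i\times_{G_{i+1}}G_i$ for $i\ge1$.
   Context: $g_{\mathrm{lin}}(\vec n)=g(e_1)^{n_1}\cdots g(e_\ell)^{n_\ell}$ and $g_2(\vec n)=g(\vec n)g_{\mathrm{lin}}(\vec n)^{-1}$. For a normal subgroup $H$ of $G$, $G\times_HG=\{(g,g')\in G^2:g'g^{-1}\in H\}$, and $G^\square=G\times_{G_2}G$. Every $x\in G$ factors uniquely as $x=\{x\}[x]$ with $[x]\in\Gamma$ and $\psi(\{x\})\in[-1/2,1/2)^d$, where $\psi$ denotes Mal'cev coordinates of the second kind ($x=\exp(t_1X_1)\cdots\exp(t_dX_d)$, $\psi(x)=(t_i)$). A filtration satisfies $G=G_0=G_1\supseteq G_2\supseteq\cdots$, $[G_i,G_j]\subseteq G_{i+j}$, $G_i$ trivial for large $i$; $\mathrm{poly}(\mathbb Z^\ell,H)$ for a filtered group $H$ consists of maps $\vec n\mapsto\prod_{\vec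 i}h_{\vec i}^{\binom{\vec n}{\vec i}}$ with $h_{\vec i}\in H_{|\vec i|}$. *)

From HB Require Import structures.
From mathcomp Require Import all_boot all_order.
From mathcomp Require Import ssralg ssrnum ssrint intdiv matrix.
From mathcomp Require Import monoid.

Set Implicit Arguments.
Unset Strict Implicit.
Unset Printing Implicit Defensive.

Definition zexpg (G : groupType) (x : G) (z : int) : G :=
  match z with
  | Posz n => (x ^+ n)%g
  | Negz n => (x ^- n.+1)%g
  end.

Definition binz (z : int) (k : nat) : int :=
  ((\prod_(j < k) (z - (j : nat)%:Z))%R %/ (k`!)%:Z)%Z.

Definition is_subgroup (G : groupType) (S : G -> Prop) : Prop :=
  S 1%g /\ (forall x y, S x -> S y -> S (x * y)%g) /\ (forall x, S x -> S (x^-1)%g).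

Definition is_filtration (G : groupType) (F : nat -> G -> Prop) : Prop :=
  (forall i, is_subgroup (F i)) /\
  (forall x, F 0 x) /\ (forall x, F 1 x) /\
  (forall i x, F i.+1 x -> F i x) /\
  (forall i j x y, F i x -> F j y -> F (i + j) [~ x, y]%g) /\
  (exists s, forall i x, s <= i -> F i x -> x = 1%g).

(* Points of Z^l are row vectors 'rV[int]_l; multi-indices of total    *)
(* degree <= D are functions 'I_l -> 'I_D.+1.                          *)
Definition mdeg (l D : nat) (i : {ffun 'I_l -> 'I_D.+1}) : nat :=
  \sum_(j < l) (i j : nat).

Definition mbinom (l D : nat) (n : 'rV[int]_l) (i : {ffun 'I_l -> 'I_D.+1}) : int :=
  (\prod_(j < l) binz (n ord0 j) (i j))%R.

(* The fixed order in which the Taylor product is taken: multi-indices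
   of degree <= D, sorted by increasing degree (ties: enumeration order). *)
Definition midx (l D : nat) : seq {ffun 'I_l -> 'I_D.+1} :=
  sort (fun a b => mdeg a <= mdeg b) [seq i <- enum {ffun 'I_l -> 'I_D.+1} | mdeg i <= D].

Definition is_poly (H : groupType) (F : nat -> H -> Prop) (l : nat)
    (g : 'rV[int]_l -> H) : Prop :=
  exists (D : nat) (c : {ffun 'I_l -> 'I_D.+1} -> H),
    (forall i, mdeg i <= D -> F (mdeg i) (c i)) /\
    (forall n, g n = (\prod_(i <- midx l D) zexpg (c i) (mbinom n i))%g).

Definition prodG (G : groupType) : Type := (G * G)%type.
HB.instance Definition _ (G : groupType) := Choice.on (prodG G).

Section ProdG.
Variable G : groupType.
Definition pmul (x y : prodG G) : prodG G := ((x.1 * y.1)%g, (x.2 * y.2)%g).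
Definition pone : prodG G := (1%g, 1%g).
Definition pinv (x : prodG G) : prodG G := ((x.1)^-1%g, (x.2)^-1%g).
Lemma pmulA : associative pmul.
Proof. by move=> [a b] [c d] [e f]; rewrite /pmul /= !mulgA. Qed.
Lemma pmul1 : left_id pone pmul.
Proof. by move=> [a b]; rewrite /pmul /= !mul1g. Qed.
Lemma pmulr1 : right_id pone pmul.
Proof. by move=> [a b]; rewrite /pmul /= !mulg1. Qed.
Lemma pmulV : left_inverse pone pinv pmul.
Proof. by move=> [a b]; rewrite /pmul /= !mulVg. Qed.
Lemma pmulVr : right_inverse pone pinv pmul.
Proof. by move=> [a b]; rewrite /pmul /= !mulgV. Qed.
End ProdG.

HB.instance Definition _ (G : groupType) :=
  isGroup.Build (prodG G) (@pmulA G) (@pmul1 G) (@pmulr1 G) (@pmulV G) (@pmulVr G).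

Definition fibprod (G : groupType) (A H : G -> Prop) (p : prodG G) : Prop :=
  A p.1 /\ A p.2 /\ H (p.2 * (p.1)^-1)%g.

Definition sq_filt (G : groupType) (F : nat -> G -> Prop) (i : nat) : prodG G -> Prop :=
  if i <= 1 then fibprod (fun _ => True) (F 2)
  else fibprod (F i) (F i.+1).

Definition unitv (l : nat) (j : 'I_l) : 'rV[int]_l := delta_mx ord0 j.

Definition g_lin (G : groupType) (l : nat) (g : 'rV[int]_l -> G) (n : 'rV[int]_l) : G :=
  (\prod_(j < l) zexpg (g (unitv j)) (n ord0 j))%g.

Definition g_2 (G : groupType) (l : nat) (g : 'rV[int]_l -> G) (n : 'rV[int]_l) : G :=
  (g n * (g_lin g n)^-1)%g.

Definition g_shift (G : groupType) (frac intp : G -> G) (l : nat)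
    (g : 'rV[int]_l -> G) (h : 'rV[int]_l) (n : 'rV[int]_l) : prodG G :=
  (((frac (g_lin g h))^-1 * g_2 g (n + h)%R * g_lin g (n + h)%R
      * (intp (g_lin g h))^-1)%g,
   g n).

(* Leibman's characterisation: u : Z^l -> H lies in poly(Z^l, H) iff each
   k-fold difference  n |-> u(n)^-1 u(n + e_t)  iterated k times takes values
   in H_k.  Binomial monomials have this property, and it is stable under
   products and commutators, which gives one direction; conversely the Taylor
   coefficients can be solved for degree by degree, and two such maps agreeing
   on the simplex of degree <= s coincide.

   For g_h, the second coordinate is g, and the first is, up to a constant
   left factor, n |-> g(n + h) conjugated by [g_lin(h)]^-1.  As G/G_2 is abelian,
   g(n + h) = g(n) g_lin(h) mod G_2, which puts g_h(n) in G^\square.  The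
   k-th differences of g at n and at n + h differ by an element of G_{k+1},
   and conjugation changes an element of G_k by a commutator in G_{k+1}; this
   is the fibre condition defining G_k x_{G_{k+1}} G_k. *)

From HB Require Import structures.
From mathcomp Require Import all_boot all_order.
From mathcomp Require Import ssralg ssrnum ssrint intdiv matrix.
From mathcomp Require Import monoid.
From mathcomp Require Import ring.

Set Implicit Arguments.
Unset Strict Implicit.
Unset Printing Implicit Defensive.

Import GRing.Theory.

Section IntBinomial.
Local Open Scope ring_scope.

Definition ffactz (z : int) (k : nat) : int := \prod_(j < k) (z - (j : nat)%:Z).

Lemma ffactz0 z : ffactz z 0 = 1.
Proof. by rewrite /ffactz big_ord0. Qed.

Lemma ffactzSr z k : ffactz z k.+1 = ffactz z k * (z - k%:Z).
Proof. by rewrite /ffactz big_ord_recr. Qed.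

Lemma ffactzSl z k : ffactz (z + 1) k.+1 = (z + 1) * ffactz z k.
Proof.
rewrite /ffactz big_ord_recl /= subr0; congr (_ * _); apply: eq_bigr => i _.
by rewrite /bump /= add1n -addn1 PoszD; ring.
Qed.

Lemma ffactz_diff z k : ffactz (z + 1) k.+1 - ffactz z k.+1 = k.+1%:Z * ffactz z k.
Proof. by rewrite ffactzSl ffactzSr -addn1 PoszD; ring. Qed.

(* Induction on [z] from [0], where the product vanishes, using [ffactz_diff]. *)
Lemma fact_dvd_ffactz k z : ((k`!)%:Z %| ffactz z k)%Z.
Proof.
elim: k z => [|k IH] z; first by rewrite ffactz0 dvdz1.
have step w : ((k.+1`!)%:Z %| ffactz w k.+1)%Z = ((k.+1`!)%:Z %| ffactz (w + 1) k.+1)%Z.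
  have dvd_diff : ((k.+1`!)%:Z %| ffactz (w + 1) k.+1 - ffactz w k.+1)%Z.
    by rewrite ffactz_diff factS PoszM dvdz_mul2l.
  by rewrite -[ffactz (w + 1) _](subrK (ffactz w k.+1)) (rpredDl _ dvd_diff).
elim/int_rect: z => [|n IHn|n IHn].
- by rewrite /ffactz big_ord_recl /= subr0 mul0r dvdz0.
- by rewrite -addn1 PoszD -step.
- by rewrite step -addn1 PoszD opprD addrNK.
Qed.

Lemma binzK z k : binz z k * (k`!)%:Z = ffactz z k.
Proof. by rewrite /binz -/(ffactz z k) divzK // fact_dvd_ffactz. Qed.

Lemma fact_neq0 k : (k`!)%:Z != 0.
Proof. by rewrite eqz_nat -lt0n fact_gt0. Qed.

Lemma binz0 z : binz z 0 = 1.
Proof. by apply: (mulIf (fact_neq0 0)); rewrite binzK ffactz0 mul1r. Qed.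

Lemma binzS z k : binz (z + 1) k.+1 = binz z k.+1 + binz z k.
Proof.
apply: (mulIf (fact_neq0 k.+1)); rewrite mulrDl !binzK.
by rewrite -(subrK (ffactz z k.+1) (ffactz (z + 1) k.+1)) ffactz_diff -binzK factS PoszM; ring.
Qed.

Lemma binz_small (a k : nat) : (a < k)%N -> binz a k = 0.
Proof.
move=> lt_ak; apply: (mulIf (fact_neq0 k)); rewrite binzK mul0r.
by rewrite /ffactz (bigD1 (Ordinal lt_ak)) //= subrr mul0r.
Qed.

Lemma binzn (a : nat) : binz a a = 1.
Proof.
apply: (mulIf (fact_neq0 a)); rewrite binzK mul1r.
elim: a => [|a IH]; first by rewrite ffactz0.
have -> : a.+1%:Z = a%:Z + 1 by rewrite -addn1 PoszD.
by rewrite ffactzSl IH factS PoszM -addn1 PoszD.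
Qed.

End IntBinomial.

Section IntPower.
Variable G : groupType.
Implicit Types (x : G) (a b z : int).
Local Open Scope group_scope.

Lemma zexpgD1 x z : zexpg x (z + 1)%R = zexpg x z * x.
Proof.
case: z => [n|n]; first by rewrite -PoszD addn1 /= expgSr.
case: n => [|n]; first by rewrite /= expg1 mulVg.
have -> : (Negz n.+1 + 1 = Negz n)%R by rewrite !NegzE -addn1 PoszD; ring.
by rewrite /= [x ^+ n.+2]expgS invgM mulgVK.
Qed.

Lemma zexpgD x a b : zexpg x (a + b)%R = zexpg x a * zexpg x b.
Proof.
have zexpgB1 c : zexpg x (c - 1)%R = zexpg x c * x^-1.
  by rewrite -{2}(subrK 1%R c) zexpgD1 mulgK.
elim/int_rect: b => [|n IH|n IH]; first by rewrite addr0 mulg1.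
  by rewrite -addn1 PoszD addrA !zexpgD1 IH mulgA.
by rewrite -addn1 PoszD opprD !addrA !zexpgB1 IH mulgA.
Qed.

Lemma zexpgN x z : zexpg x (- z)%R = (zexpg x z)^-1.
Proof. by apply/esym/mulg1_eq; rewrite -zexpgD subrr. Qed.

Lemma zexpgB x a b : (zexpg x a)^-1 * zexpg x b = zexpg x (b - a)%R.
Proof. by rewrite addrC zexpgD zexpgN. Qed.

Lemma zexpVg x z : zexpg x^-1 z = (zexpg x z)^-1.
Proof. by case: z => n /=; rewrite expVgn // invgK. Qed.

Lemma zexpg_mem (S : G -> Prop) x z : is_subgroup S -> S x -> S (zexpg x z).
Proof.
move=> [S1 [SM SV]] Sx.
have Sexp n : S (x ^+ n) by elim: n => // n IH; rewrite expgS; apply: SM.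
by case: z => n /=; [apply: Sexp | apply/SV/Sexp].
Qed.

End IntPower.

Lemma sorted_filter_cat (T : eqType) (key : T -> nat) a (r : seq T) :
    sorted (fun x y => key x <= key y) r ->
  r = filter (fun x => key x < a) r ++ filter (fun x => a <= key x) r.
Proof.
elim: r => [//|x r IH] /= r_sorted.
have key_ge_x := order_path_min (fun p q w => @leq_trans (key p) (key q) (key w)) r_sorted.
case: (ltnP (key x) a) => xa /=; first by rewrite -IH // (path_sorted r_sorted).
have /all_filterP -> : all (fun y => a <= key y) r.
  by apply: sub_all key_ge_x => y; apply: leq_trans.
rewrite (@eq_in_filter _ _ pred0) ?filter_pred0 // => y /(allP key_ge_x).
by move/(leq_trans xa); rewrite leqNgt => /negbTE.
Qed.

Section Lattice.
Local Open Scope ring_scope.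
Variable l : nat.
Implicit Types (n : 'rV[int]_l) (t : 'I_l) (i : 'I_l -> nat).

Definition mbin n i : int := \prod_(j < l) binz (n ord0 j) (i j).

Definition decr t i : 'I_l -> nat := fun j => if j == t then (i j).-1 else i j.

Lemma add_unitvE n t j : (n + unitv t) ord0 j = n ord0 j + (j == t)%:R.
Proof. by rewrite !mxE. Qed.

Lemma mbin_diff n t i :
  mbin (n + unitv t) i - mbin n i = if (0 < i t)%N then mbin n (decr t i) else 0.
Proof.
rewrite /mbin (bigD1 t) //= [X in _ - X](bigD1 t) //=.
have -> : \prod_(j < l | j != t) binz ((n + unitv t) ord0 j) (i j) =
          \prod_(j < l | j != t) binz (n ord0 j) (i j).
  by apply: eq_bigr => j /negbTE jt; rewrite add_unitvE jt addr0.
rewrite add_unitvE eqxx -mulrBl.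
case Eit: (i t) => [|k] /=; first by rewrite !binz0 subrr mul0r.
rewrite binzS addrAC subrr add0r [RHS](bigD1 t) //= /decr eqxx Eit.
by congr (_ * _); apply: eq_bigr => j /negbTE ->.
Qed.

Lemma zvec_ind (Q : 'rV[int]_l -> Prop) : Q 0 ->
    (forall n t, Q n -> Q (n + unitv t)) -> (forall n t, Q n -> Q (n - unitv t)) ->
  forall n, Q n.
Proof.
move=> Q0 Qp Qm.
have Qline t (z : int) n : Q n -> Q (n + z *: unitv t).
  elim/int_rect: z n => [|k IH|k IH] n Qn; first by rewrite scale0r addr0.
    by rewrite intS (addrC 1%:Z) scalerDl scale1r addrA; apply/Qp/IH.
  by rewrite intS (addrC 1%:Z) opprD scalerDl scaleN1r addrA; apply/Qm/IH.
have Qsum (r : seq 'I_l) (f : 'I_l -> int) n : Q n -> Q (n + \sum_(t <- r) f t *: unitv t).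
  elim: r n => [|t r IH] n Qn; first by rewrite big_nil addr0.
  by rewrite big_cons addrCA addrC; apply/Qline/IH.
by move=> n; rewrite (row_sum_delta n) -[X in Q X]add0r; apply: Qsum.
Qed.

Definition deg i : nat := \sum_(t < l) i t.

Lemma deg_decr t i : (0 < i t)%N -> deg i = (deg (decr t i)).+1.
Proof.
move=> it; rewrite /deg (bigD1 t) //= [in RHS](bigD1 t) //= /decr eqxx.
by rewrite -addSn prednK //; congr (_ + _); apply: eq_bigr => j /negbTE ->.
Qed.

Definition incr t i : 'I_l -> nat := fun j => (i j + (j == t))%N.

Definition incrs (K : seq 'I_l) i : 'I_l -> nat := foldr incr i K.

Definition natv i : 'rV[int]_l := \row_j (i j)%:Z.

Lemma natv_incr t i : natv (incr t i) = natv i + unitv t.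
Proof. by apply/rowP => j; rewrite add_unitvE !mxE /incr PoszD; case: (j == t). Qed.

Lemma natv0 : natv (fun _ => 0%N) = 0.
Proof. by apply/rowP => j; rewrite !mxE. Qed.

Lemma deg0 : deg (fun _ => 0%N) = 0%N.
Proof. by rewrite /deg big1. Qed.

Lemma deg_incr t i : deg (incr t i) = (deg i).+1.
Proof.
rewrite /deg /incr big_split /= -addn1; congr (_ + _).
by rewrite (bigD1 t) //= eqxx big1 // => j /negbTE ->.
Qed.

Lemma deg_incrs K i : deg (incrs K i) = (deg i + size K)%N.
Proof. by elim: K => [|t K IH] /=; rewrite ?addn0 // deg_incr IH addnS. Qed.

Lemma incrs_surj i : exists K, size K = deg i /\ incrs K (fun _ => 0%N) =1 i.
Proof.
move: {2}(deg i) (erefl (deg i)) => k; elim: k i => [|k IH] i Di.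
  exists [::]; split=> // j /=; apply/esym/eqP.
  by move/eqP: Di; rewrite /deg sum_nat_eq0 => /forallP; apply.
have [t it] : exists t, (0 < i t)%N.
  apply/existsP/contraT; rewrite negb_exists => /forallP i0.
  by move: Di; rewrite /deg big1 // => j _; apply/eqP; rewrite -leqn0 leqNgt i0.
have [K [sK HK]] := IH (decr t i) (succn_inj (etrans (esym (deg_decr it)) Di)).
exists (t :: K); split=> [|j]; first by rewrite /= sK -deg_decr.
rewrite /= /incr HK /decr; case: (eqVneq j t) => [->|]; last by rewrite addn0.
by rewrite addn1 prednK.
Qed.

End Lattice.

Section GroupIdentities.
Variable G : groupType.
Local Open Scope group_scope.

Lemma conjg_mulR (x y : G) : x ^ y = x * [~ x, y].
Proof. by rewrite commgEl mulVKg. Qed.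

Lemma diff_mulg (u u' v v' : G) :
  (u * v)^-1 * (u' * v') = (u^-1 * u') * [~ u^-1 * u', v] * (v^-1 * v').
Proof. by rewrite /commg /conjg !gnorm. Qed.

Lemma diff_commg (u u' v v' : G) :
  let a := u^-1 * u' in let b := v^-1 * v' in let c := [~ u, v] in
  let w := [~ u, b] ^ a in
  [~ u, v]^-1 * [~ u', v'] =
  w * [~ w, c] * ([~ c, a] * [~ c, b] ^ a) * [~ a, b] * [~ a, v] ^ b.
Proof. by rewrite /commg /conjg !gnorm. Qed.

End GroupIdentities.

Section FilteredGroup.
Variable H : groupType.
Variable F : nat -> H -> Prop.
Hypothesis F_subgroup : forall i, is_subgroup (F i).
Hypothesis F_nested : forall i x, F i.+1 x -> F i x.
Hypothesis F_commg : forall i j x y, F i x -> F j y -> F (i + j) [~ x, y].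
Local Open Scope group_scope.

Lemma filt1 i : F i 1.
Proof. by case: (F_subgroup i). Qed.

Lemma filtM i x y : F i x -> F i y -> F i (x * y).
Proof. by case: (F_subgroup i) => _ [M _]; apply: M. Qed.

Lemma filtV i x : F i x -> F i x^-1.
Proof. by case: (F_subgroup i) => _ [_ V]; apply: V. Qed.

Lemma filt_le i j x : i <= j -> F j x -> F i x.
Proof.
move=> /subnK <-; elim: (j - i)%N => [|k IH] Fx; first by rewrite add0n in Fx.
by apply/IH/F_nested; rewrite -addSn.
Qed.

Lemma filtJ i x y : F i x -> F 0 y -> F i (x ^ y).
Proof.
by move=> Fx Fy; rewrite conjg_mulR; apply: filtM => //; rewrite -[i]addn0; apply: F_commg.
Qed.

Variable l : nat.
Implicit Types (u v : 'rV[int]_l -> H) (t : 'I_l) (K : seq 'I_l) (n : 'rV[int]_l).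

Definition diffq t u n := (u n)^-1 * u (n + unitv t)%R.

Definition diffqs K u := foldl (fun u t => diffq t u) u K.

(* Leibman's difference condition, for the filtration shifted by [i]; it is
   equivalent to [is_poly] when [i = 0] ([is_poly_dpoly], [is_dpoly_poly]). *)
Definition is_dpoly i u := forall K n, F (i + size K) (diffqs K u n).

Definition is_dpoly_upto N i u :=
  forall K, size K <= N -> forall n, F (i + size K) (diffqs K u n).

Definition commg_fun u v n := [~ u n, v n].
Definition conjg_fun u v n := u n ^ v n.

Lemma diffqs_cat K K' u : diffqs (K ++ K') u = diffqs K' (diffqs K u).
Proof. by rewrite /diffqs foldl_cat. Qed.

Lemma eq_diffqs K u v : u =1 v -> diffqs K u =1 diffqs K v.
Proof. by elim: K u v => //= t K IH u v E; apply: IH => n; rewrite /diffq !E. Qed.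

Lemma diffqs1 K : diffqs K (fun=> 1) =1 fun=> 1.
Proof.
elim: K => //= t K IH n; rewrite -[RHS](IH n).
by apply: eq_diffqs => m; rewrite /diffq mulg1 invg1.
Qed.

Lemma diffq_mul t u v n :
  diffq t (mul_fun u v) n =
  mul_fun (mul_fun (diffq t u) (commg_fun (diffq t u) v)) (diffq t v) n.
Proof. by rewrite /diffq /= diff_mulg. Qed.

Lemma diffq_commg t u v n : diffq t (commg_fun u v) n =
  let a := diffq t u in let b := diffq t v in let c := commg_fun u v in
  let w := conjg_fun (commg_fun u b) a in
  mul_fun (mul_fun (mul_fun (mul_fun w (commg_fun w c))
     (mul_fun (commg_fun c a) (conjg_fun (commg_fun c b) a)))
     (commg_fun a b)) (conjg_fun (commg_fun a v) b) n.
Proof. by rewrite /diffq /= /commg_fun /conjg_fun diff_commg. Qed.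

Lemma is_dpoly_val i u n : is_dpoly i u -> F i (u n).
Proof. by move=> Pu; have := Pu [::] n; rewrite addn0. Qed.

Lemma is_dpoly_diffq i u t : is_dpoly i u -> is_dpoly i.+1 (diffq t u).
Proof. by move=> Pu K n; have := Pu (t :: K) n; rewrite /= addnS addSn. Qed.

Lemma eq_is_dpoly i u v : u =1 v -> is_dpoly i u -> is_dpoly i v.
Proof. by move=> E Pu K n; rewrite -(eq_diffqs K E). Qed.

Lemma is_dpoly1 i : is_dpoly i (fun=> 1).
Proof. by move=> K n; rewrite diffqs1; apply: filt1. Qed.

Lemma is_dpolyE i u : is_dpoly i u <-> forall N, is_dpoly_upto N i u.
Proof. by split=> [Pu N K _ n | Pu K n]; [apply: Pu | apply: (Pu (size K))]. Qed.

Lemma is_dpoly_upto0 i u : is_dpoly_upto 0 i u <-> forall n, F i (u n).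
Proof.
split=> [Pu n | Fu [|//] _ n]; last by rewrite addn0.
by have := Pu [::] isT n; rewrite addn0.
Qed.

Lemma is_dpoly_uptoS N i u : is_dpoly_upto N.+1 i u <->
  (forall n, F i (u n)) /\ forall t, is_dpoly_upto N i.+1 (diffq t u).
Proof.
split=> [Pu | [Fu Du] [|t K] sK n /=]; last 2 first.
- by rewrite addn0.
- by have := Du t K sK n; rewrite addnS addSn.
split=> [n | t K sK n]; first by have := Pu [::] isT n; rewrite addn0.
by have := Pu (t :: K) sK n; rewrite /= addnS addSn.
Qed.

Lemma is_dpoly_upto_le N M i j u : N <= M -> i <= j ->
  is_dpoly_upto M j u -> is_dpoly_upto N i u.
Proof.
move=> NM ij Pu K sK n; apply: (filt_le _ (Pu K (leq_trans sK NM) n)).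
by rewrite leq_add2r.
Qed.

Lemma eq_is_dpoly_upto N i u v : u =1 v -> is_dpoly_upto N i u -> is_dpoly_upto N i v.
Proof. by move=> E Pu K sK n; rewrite -(eq_diffqs K E); apply: Pu. Qed.

Lemma diffqs_shift K u h n : diffqs K (fun m => u (m + h)%R) n = diffqs K u (n + h)%R.
Proof.
elim: K u n => [//|t K IH] u n /=; rewrite -IH; apply: eq_diffqs => m.
by rewrite /diffq GRing.addrAC.
Qed.

Lemma diffqs_conjg K u y n : diffqs K (fun m => u m ^ y) n = diffqs K u n ^ y.
Proof.
elim: K u n => [//|t K IH] u n /=; rewrite -IH; apply: eq_diffqs => m.
by rewrite /diffq /conjg !gnorm.
Qed.

Lemma diffqs_mul_const K u x y n : K != [::] ->
  diffqs K (fun m => x * u m * y) n = diffqs K u n ^ y.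
Proof.
case: K => [//|t K] _ /=; rewrite -diffqs_conjg; apply: eq_diffqs => m.
by rewrite /diffq /conjg !gnorm.
Qed.

Lemma filt_diff_shift j u : (forall t n, F j (diffq t u n)) ->
  forall h n, F j ((u n)^-1 * u (n + h)%R).
Proof.
move=> Fdu; apply: zvec_ind => [n | h t IH n | h t IH n].
- by rewrite GRing.addr0 mulVg; apply: filt1.
- have -> : (u n)^-1 * u (n + (h + unitv t))%R =
            (u n)^-1 * u (n + h)%R * diffq t u (n + h)%R.
    by rewrite /diffq GRing.addrA !mulgA mulgK.
  exact: filtM.
- have -> : (u n)^-1 * u (n + (h - unitv t))%R =
            (u n)^-1 * u (n + h)%R * (diffq t u (n + (h - unitv t))%R)^-1.
    by rewrite /diffq invgM invgK GRing.addrA GRing.subrK mulgA mulgK -GRing.addrA.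
  by apply: filtM => //; apply: filtV.
Qed.

(* Induction on the difference order: by [diffq_mul] and [diffq_commg], the
   differences of [u * v] and [[u, v]] are built from lower-order data. *)
Lemma is_dpoly_upto_mul_commg N :
  (forall k u v, is_dpoly_upto N k u -> is_dpoly_upto N k v ->
     is_dpoly_upto N k (mul_fun u v)) /\
  (forall a b u v, is_dpoly_upto N a u -> is_dpoly_upto N b v ->
     is_dpoly_upto N (a + b) (commg_fun u v)).
Proof.
elim: N => [|N [IHM IHC]].
  split=> [k | a b] u v /is_dpoly_upto0 Fu /is_dpoly_upto0 Fv; apply/is_dpoly_upto0 => n.
    exact: filtM.
  exact: F_commg.
have IHJ k a u v : is_dpoly_upto N k u -> is_dpoly_upto N a v ->
    is_dpoly_upto N k (conjg_fun u v).
  move=> Pu Pv; apply: (@eq_is_dpoly_upto _ _ (mul_fun u (commg_fun u v))).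
    by move=> n; rewrite /conjg_fun /commg_fun /= conjg_mulR.
  by apply: (IHM) => //; apply: (is_dpoly_upto_le (leqnn N) (leq_addr a k)); apply: IHC.
have IHC' a b c u v : is_dpoly_upto N a u -> is_dpoly_upto N b v -> c <= a + b ->
    is_dpoly_upto N c (commg_fun u v).
  by move=> Pu Pv abc; apply: (is_dpoly_upto_le (leqnn N) abc); apply: IHC.
split=> [k | a b] u v Pu' Pv';
  have /is_dpoly_uptoS [Fu Du] := Pu'; have /is_dpoly_uptoS [Fv Dv] := Pv'.
  have Pv := is_dpoly_upto_le (leqnSn N) (leqnn k) Pv'.
  apply/is_dpoly_uptoS; split=> [n | t]; first exact: filtM.
  apply: (eq_is_dpoly_upto (fun n => esym (diffq_mul t u v n))).
  by apply: (IHM) => //; apply: (IHM) => //; apply: (IHC' k.+1 k) => //; apply: leq_addr.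
have Pu := is_dpoly_upto_le (leqnSn N) (leqnn a) Pu'.
have Pv := is_dpoly_upto_le (leqnSn N) (leqnn b) Pv'.
apply/is_dpoly_uptoS; split=> [n | t]; first exact: F_commg.
apply: (eq_is_dpoly_upto (fun n => esym (diffq_commg t u v n))).
have Pc : is_dpoly_upto N (a + b) (commg_fun u v) by apply: IHC.
have Pw : is_dpoly_upto N (a + b).+1 (conjg_fun (commg_fun u (diffq t v)) (diffq t u)).
  by apply: (IHJ _ a.+1) => //; rewrite -addnS; apply: IHC.
apply: (IHM); last by apply: (IHJ _ b.+1) => //; apply: (IHC' a.+1 b) => //; rewrite addSn.
apply: (IHM); last by apply: (IHC' a.+1 b.+1) => //; rewrite addSn addnS ltnW.
apply: (IHM); first by apply: (IHM) => //; apply: (IHC' _ _ _ _ _ Pw Pc); apply: leq_addr.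
apply: (IHM); first by apply: (IHC' (a + b) a.+1) => //; rewrite addnS ltnS leq_addr.
apply: (IHJ _ a.+1) => //; apply: (IHC' (a + b) b.+1) => //.
by rewrite addnS ltnS leq_addr.
Qed.

Lemma is_dpoly_mul i u v : is_dpoly i u -> is_dpoly i v -> is_dpoly i (mul_fun u v).
Proof.
move=> /is_dpolyE Pu /is_dpolyE Pv; apply/is_dpolyE => N.
by case: (is_dpoly_upto_mul_commg N) => M _; apply: M.
Qed.

Lemma is_dpoly_prod (X : eqType) (r : seq X) (P : pred X) (f : X -> 'rV[int]_l -> H) i :
    (forall x, x \in r -> P x -> is_dpoly i (f x)) ->
  is_dpoly i (fun n => \prod_(x <- r | P x) f x n).
Proof.
elim: r => [|x r IH] Pf.
  by apply: (@eq_is_dpoly _ (fun=> 1)) (is_dpoly1 _) => n; rewrite big_nil.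
have Pr : is_dpoly i (fun n => \prod_(x <- r | P x) f x n).
  by apply: IH => y yr; apply: Pf; rewrite in_cons yr orbT.
case Px: (P x).
  apply: (@eq_is_dpoly _ (mul_fun (f x) (fun n => \prod_(x <- r | P x) f x n))).
    by move=> n; rewrite big_cons Px.
  by apply: is_dpoly_mul => //; apply: Pf; rewrite ?mem_head.
by apply: eq_is_dpoly Pr => n; rewrite big_cons Px.
Qed.

Definition monomial (c : H) (i : 'I_l -> nat) n := zexpg c (mbin n i).

Lemma diffq_monomial t c i n : diffq t (monomial c i) n =
  if (0 < i t)%N then monomial c (decr t i) n else 1.
Proof. by rewrite /diffq /monomial zexpgB mbin_diff; case: ifP. Qed.

Lemma is_dpoly_monomial c i : F (deg i) c -> is_dpoly 0 (monomial c i).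
Proof.
suff dmono K j c' i' n : F (j + deg i') c' -> F (j + size K) (diffqs K (monomial c' i') n).
  by move=> Fc K n; apply: dmono; rewrite add0n.
elim: K j c' i' n => [|t K IH] j c' i' n Fc.
  by rewrite addn0; apply: zexpg_mem => //; apply: filt_le Fc; apply: leq_addr.
rewrite /= (eq_diffqs K (diffq_monomial t c' i')).
case: (ltnP 0 (i' t)) => [it | _]; last by rewrite diffqs1; apply: filt1.
by rewrite addnS -addSn; apply: IH; rewrite addSn -addnS -deg_decr.
Qed.

Lemma is_poly_dpoly u : is_poly F u -> is_dpoly 0 u.
Proof.
move=> [D [c [Fc Eu]]]; apply: (eq_is_dpoly (fun n => esym (Eu n))).
apply: is_dpoly_prod => i; rewrite mem_sort mem_filter => /andP [Di _] _.
exact/is_dpoly_monomial/Fc.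
Qed.

Variable s : nat.
Hypothesis F_trivial : forall i x, s <= i -> F i x -> x = 1.

Lemma is_dpoly_triv i u : s <= i -> is_dpoly i u -> u =1 fun=> 1.
Proof. by move=> si Pu n; apply: (F_trivial si); apply: is_dpoly_val. Qed.

(* Induction on [N]: the first differences agree on the simplex of degree
   [N - 1], and everything is trivial once [s <= i]. *)
Lemma is_dpoly_eq N i u v : s <= i + N -> is_dpoly i u -> is_dpoly i v ->
  (forall p, deg p <= N -> u (natv p) = v (natv p)) -> u =1 v.
Proof.
elim: N i u v => [|N IH] i u v sN Pu Pv Euv.
  by rewrite addn0 in sN; move=> n; rewrite (is_dpoly_triv sN Pu) (is_dpoly_triv sN Pv).
have [si | _] := leqP s i.
  by move=> n; rewrite (is_dpoly_triv si Pu) (is_dpoly_triv si Pv).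
have Ediff t : diffq t u =1 diffq t v.
  apply: (IH i.+1); rewrite ?addSnnS //; try exact: is_dpoly_diffq.
  move=> p Dp; rewrite /diffq -natv_incr !Euv // ?deg_incr //.
  exact: leq_trans Dp _.
apply: zvec_ind => [|n t E|n t E]; first by rewrite -natv0 Euv // deg0.
  by have := Ediff t n; rewrite /diffq E => /mulgI.
have := Ediff t (n - unitv t)%R; rewrite /diffq GRing.subrK E.
by move/(congr1 (fun x => x^-1)); rewrite !invgM !invgK => /mulgI.
Qed.

Lemma diffqs_vanish K u i :
    (forall p, deg p < deg i + size K -> u (natv p) = 1) ->
  diffqs K u (natv i) = u (natv (incrs K i)).
Proof.
elim: K u i => [//|t K IH] u i u0 /=.
rewrite IH /diffq; last first.
  move=> p Dp; rewrite -natv_incr !u0 ?invg1 ?mulg1 //.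
    by rewrite deg_incr /= addnS ltnS.
  by rewrite /= addnS ltnS ltnW.
by rewrite natv_incr u0 ?invg1 ?mul1g // deg_incrs /= addnS.
Qed.

Section TaylorCoefficients.
Variable D : nat.
Local Notation I := {ffun 'I_l -> 'I_D.+1}.
Implicit Types (i m : I) (c : I -> H).

Definition idxv i := natv (fun j => i j).

Definition taylor_lt c k n :=
  \prod_(i <- midx l D | mdeg i < k) zexpg (c i) (mbinom n i).

Lemma midx_sorted : sorted (fun a b => mdeg a <= mdeg b) (midx l D).
Proof. by apply: sort_sorted => a b; apply: leq_total. Qed.

Lemma midx_uniq : uniq (midx l D).
Proof. by rewrite sort_uniq filter_uniq // enum_uniq. Qed.

Lemma mem_midx i : (i \in midx l D) = (mdeg i <= D).
Proof. by rewrite mem_sort mem_filter mem_enum andbT. Qed.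

Lemma mbinom_idxv_small i m : (exists j, m j < i j) -> mbinom (idxv m) i = 0%R.
Proof.
by move=> [j ij]; rewrite /mbinom (bigD1 j) //= mxE binz_small // GRing.mul0r.
Qed.

Lemma mbinom_idxvn m : mbinom (idxv m) m = 1%R.
Proof. by rewrite /mbinom big1 // => j _; rewrite mxE binzn. Qed.

Lemma eq_ffun_le_mdeg i m : (forall j, i j <= m j) -> mdeg i = mdeg m -> i = m.
Proof.
move=> le_im Eim; apply/ffunP => j; apply: val_inj => /=.
have : \sum_(t < l) (m t - i t)%N == 0%N by rewrite sumnB // -/(mdeg m) -/(mdeg i) Eim subnn.
rewrite sum_nat_eq0 => /forallP /(_ j) /=; rewrite subn_eq0 => le_mi.
by apply/eqP; rewrite eqn_leq le_im.
Qed.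

(* At the point [idxv m], every term of degree [>= mdeg m] other than [m]
   itself carries a vanishing binomial, and [m] carries exponent 1. *)
Lemma taylor_lt_idxv c k m : mdeg m <= D -> mdeg m < k ->
  taylor_lt c k (idxv m) = taylor_lt c (mdeg m) (idxv m) * c m.
Proof.
move=> mD mk; set a := mdeg m; set f := fun i => zexpg (c i) (mbinom (idxv m) i).
have -> : taylor_lt c k (idxv m) = \prod_(i <- midx l D | (mdeg i < a) || (i == m)) f i.
  rewrite /taylor_lt big_mkcond [RHS]big_mkcond; apply: eq_bigr => i _.
  case: (ltnP (mdeg i) a) => ia /=; first by rewrite (leq_trans ia (ltnW mk)).
  case: (eqVneq i m) => [->|im]; first by rewrite mk.
  case: ifP => // _; rewrite /f mbinom_idxv_small //.
  apply/existsP/contraT; rewrite negb_exists => /forallP ge_mi.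
  have le_im j : i j <= m j by rewrite leqNgt ge_mi.
  have /eqP Eim : mdeg i == mdeg m.
    by rewrite eqn_leq ia andbT; apply: leq_sum => j _; apply: le_im.
  by rewrite (eq_ffun_le_mdeg le_im Eim) eqxx in im.
rewrite (@sorted_filter_cat _ _ a _ midx_sorted) big_cat /= !big_filter_cond.
congr (_ * _).
  by apply: eq_bigl => i; case: (mdeg i < a).
rewrite -big_filter (@eq_filter _ _ (pred1 m)) ?filter_pred1_uniq ?midx_uniq ?mem_midx //.
  by rewrite big_seq1 /f mbinom_idxvn.
move=> i /=; case: (eqVneq i m) => [->|]; first by rewrite leqnn orbT.
by rewrite orbF andbC; case: ltnP.
Qed.

Variable u : 'rV[int]_l -> H.
Hypothesis u_dpoly : is_dpoly 0 u.
Hypothesis s_le_D : s <= D.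

Fixpoint taylor_coef_upto k : I -> H :=
  if k is k'.+1 then fun i =>
    if mdeg i == k' then (taylor_lt (taylor_coef_upto k') k' (idxv i))^-1 * u (idxv i)
    else taylor_coef_upto k' i
  else fun=> 1.

Definition taylor_coef := taylor_coef_upto D.+1.

Lemma taylor_coef_upto_stable k i :
  mdeg i < k -> taylor_coef_upto k i = taylor_coef_upto (mdeg i).+1 i.
Proof.
elim: k => // k IH; rewrite ltnS leq_eqVlt => /orP [/eqP -> // | lt_ik].
by rewrite /= (ltn_eqF lt_ik) IH.
Qed.

Lemma taylor_lt_upto k j n : j <= k ->
  taylor_lt (taylor_coef_upto k) j n = taylor_lt (taylor_coef_upto j) j n.
Proof.
move=> jk; apply: eq_bigr => i ij.
by rewrite (@taylor_coef_upto_stable k) ?(leq_trans ij jk) // (@taylor_coef_upto_stable j).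
Qed.

Lemma taylor_coefE m : mdeg m <= D ->
  taylor_coef m = (taylor_lt taylor_coef (mdeg m) (idxv m))^-1 * u (idxv m).
Proof.
move=> mD; rewrite /taylor_coef taylor_coef_upto_stable ?ltnS //= eqxx.
by rewrite (@taylor_lt_upto D.+1) // ltnW.
Qed.

Lemma taylor_lt_coef_idxv m k : mdeg m <= D -> mdeg m < k ->
  u (idxv m) = taylor_lt taylor_coef k (idxv m).
Proof. by move=> mD mk; rewrite taylor_lt_idxv // (taylor_coefE mD) mulVKg. Qed.

Lemma natv_idxv p : deg p <= D -> exists i, idxv i = natv p /\ mdeg i = deg p.
Proof.
move=> pD; have pj j : p j < D.+1.
  by rewrite ltnS; apply: leq_trans pD; rewrite /deg (bigD1 j) //= leq_addr.
exists [ffun j => inord (p j)]; split.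
  by apply/rowP => j; rewrite !mxE ffunE inordK.
by apply: eq_bigr => j _; rewrite ffunE inordK.
Qed.

(* Induction on the degree: [taylor_coef m] is a [mdeg m]-fold difference, at
   the origin, of [u] times the inverse of the lower-degree Taylor product,
   which is in [is_dpoly 0] by the induction hypothesis. *)
Lemma taylor_coef_filt m : mdeg m <= D -> F (mdeg m) (taylor_coef m).
Proof.
move: {2}(mdeg m).+1 (ltnSn (mdeg m)) => k; elim: k m => // k IH m.
rewrite ltnS leq_eqVlt => /orP [/eqP Ek | /IH //] mD.
set a := mdeg m in Ek *.
pose w n := \prod_(i <- rev (midx l D) | mdeg i < a) monomial (taylor_coef i)^-1 (fun j => i j) n.
have Ew n : w n = (taylor_lt taylor_coef a n)^-1.
  rewrite /taylor_lt -[midx l D]revK -prodgV; apply: eq_bigr => i _.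
  by rewrite /monomial zexpVg.
have Pw : is_dpoly 0 (mul_fun w u).
  apply: is_dpoly_mul => //; apply: is_dpoly_prod => i; rewrite mem_rev mem_midx => iD ia.
  by apply/is_dpoly_monomial/filtV/IH => //; rewrite -Ek.
have [K [sK EK]] := incrs_surj (fun j => m j).
have w_u0 (p : 'I_l -> nat) :
    deg p < deg (fun _ : 'I_l => 0%N) + size K -> mul_fun w u (natv p) = 1.
  rewrite deg0 add0n sK => pa.
  have [i [<- Di]] := natv_idxv (ltnW (leq_trans pa mD)).
  by rewrite /= Ew (@taylor_lt_coef_idxv i a) ?mulVg // Di // ltnW // (leq_trans pa mD).
have := Pw K (natv (fun=> 0%N)); rewrite (diffqs_vanish w_u0) add0n sK.
have -> : natv (incrs K (fun=> 0%N)) = idxv m by apply/rowP => j; rewrite !mxE EK.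
by rewrite /= Ew -taylor_coefE.
Qed.

Lemma is_dpoly_poly : is_poly F u.
Proof.
have coef_filt i : mdeg i <= D -> F (mdeg i) (taylor_coef i) by apply: taylor_coef_filt.
exists D, taylor_coef; split=> //; apply: (@is_dpoly_eq D 0) => //.
  by apply: is_poly_dpoly; exists D, taylor_coef.
move=> p pD; have [i [<- Di]] := natv_idxv pD.
rewrite (@taylor_lt_coef_idxv i D.+1) ?Di // /taylor_lt -big_filter.
by congr (\prod_(i <- _) _); apply/all_filterP/allP => j; rewrite mem_midx.
Qed.

End TaylorCoefficients.

End FilteredGroup.

Section CongruenceModCommutators.
Variable G : groupType.
Variable N : G -> Prop.
Hypothesis N_subgroup : is_subgroup N.
Hypothesis N_commg : forall x y, N [~ x, y].
Local Open Scope group_scope.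
Implicit Types x y z : G.

Definition eqmodg x y := N (x^-1 * y).

Let NM x y : N x -> N y -> N (x * y). Proof. by case: N_subgroup => _ [M _]; apply: M. Qed.
Let NV x : N x -> N x^-1. Proof. by case: N_subgroup => _ [_ V]; apply: V. Qed.

Lemma conjg_mem x y : N x -> N (x ^ y).
Proof. by move=> Nx; rewrite conjg_mulR; apply: NM. Qed.

Lemma eqmodg_refl x : eqmodg x x.
Proof. by rewrite /eqmodg mulVg; case: N_subgroup. Qed.

Lemma eqmodg_sym x y : eqmodg x y -> eqmodg y x.
Proof. by move/NV; rewrite /eqmodg invgM invgK. Qed.

Lemma eqmodg_trans y x z : eqmodg x y -> eqmodg y z -> eqmodg x z.
Proof. by move=> Nxy Nyz; rewrite /eqmodg -[z](mulVKg y) mulgA; apply: NM. Qed.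

Lemma eqmodgM x x' y y' : eqmodg x x' -> eqmodg y y' -> eqmodg (x * y) (x' * y').
Proof.
move=> Nx Ny; rewrite /eqmodg; have -> : (x * y)^-1 * (x' * y') = (x^-1 * x') ^ y * (y^-1 * y').
  by rewrite /conjg !gnorm.
by apply: NM => //; apply: conjg_mem.
Qed.

Lemma eqmodgC x y : eqmodg (x * y) (y * x).
Proof.
by rewrite /eqmodg (_ : _ * _ = [~ y, x]) // /commg /conjg !gnorm.
Qed.

Lemma eqmodg_divr x y : eqmodg y x -> N (x * y^-1).
Proof.
move=> Nyx; have -> : x * y^-1 = (y^-1 * x) ^ y^-1 by rewrite /conjg !gnorm.
exact: conjg_mem.
Qed.

Lemma eqmodg_conjl x y : eqmodg (x ^ y) x.
Proof. by rewrite /eqmodg (_ : _ * _ = [~ y, x]) // /commg /conjg !gnorm. Qed.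

Lemma eqmodg_mulIr x y z : eqmodg (x * z) (y * z) -> eqmodg x y.
Proof. by move/eqmodgM/(_ (eqmodg_refl z^-1)); rewrite !mulgK. Qed.

Lemma eqmodg_prod_mulr (I : eqType) (r : seq I) (f f' : I -> G) t c :
    uniq r -> t \in r -> (forall j, j != t -> f' j = f j) -> f' t = f t * c ->
  eqmodg ((\prod_(j <- r) f j) * c) (\prod_(j <- r) f' j).
Proof.
move=> + + f'f f't; elim: r => [//|x r IH] /= /andP [xr ur].
rewrite !big_cons -mulgA in_cons; case: (eqVneq x t) xr => [-> tr _ | xt _ /= tr].
  rewrite f't -mulgA; apply: eqmodgM; first exact: eqmodg_refl.
  rewrite (eq_big_seq f) => [|j jr]; first exact: eqmodgC.
  by apply: f'f; apply: contraNneq tr => <-.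
by rewrite f'f //; apply: eqmodgM; [apply: eqmodg_refl | apply: IH].
Qed.

End CongruenceModCommutators.

Section SquareFiltration.
Variable G : groupType.
Variable Gf : nat -> G -> Prop.
Hypothesis Gf_subgroup : forall i, is_subgroup (Gf i).
Hypothesis Gf_all1 : forall x, Gf 1 x.
Hypothesis Gf_nested : forall i x, Gf i.+1 x -> Gf i x.
Hypothesis Gf_commg : forall i j x y, Gf i x -> Gf j y -> Gf (i + j) [~ x, y].
Local Open Scope group_scope.
Local Notation sq := (sq_filt Gf).
Implicit Types p q : prodG G.

Let Gf_all0 x : Gf 0 x. Proof. exact/Gf_nested/Gf_all1. Qed.
Let GfM := filtM Gf_subgroup.
Let GfV := filtV Gf_subgroup.
Let GfJ := filtJ Gf_subgroup Gf_commg.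
Let Gf_le := filt_le Gf_nested.

Lemma sq_filtE i p : sq i p <->
  [/\ Gf (maxn i 1) p.1, Gf (maxn i 1) p.2 & Gf (maxn i 1).+1 (p.2 * p.1^-1)].
Proof.
rewrite /sq_filt /fibprod; case: ifP => i1.
  by rewrite (maxn_idPr i1); split=> [[_ [_ ?]] | [_ _ ?]].
rewrite (maxn_idPl _); last by rewrite ltnW // ltnNge i1.
by split=> [[? [? ?]] | [? ? ?]].
Qed.

Lemma sq_filt_subgroup i : is_subgroup (sq i).
Proof.
split; first by apply/sq_filtE; rewrite /= invg1 mulg1; split; apply: filt1.
split=> [p q /sq_filtE [p1 p2 p21] /sq_filtE [q1 q2 q21] | p /sq_filtE [p1 p2 p21]];
  apply/sq_filtE; split=> /=; try by [apply: GfM | apply: GfV].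
  have -> : p.2 * q.2 * (p.1 * q.1)^-1 = (q.2 * q.1^-1) ^ p.2^-1 * (p.2 * p.1^-1).
    by rewrite /conjg !gnorm.
  by apply: GfM => //; apply: GfJ.
have -> : p.2^-1 * (p.1^-1)^-1 = (p.2 * p.1^-1)^-1 ^ p.2 by rewrite /conjg !gnorm.
by apply: GfJ => //; apply: GfV.
Qed.

Lemma sq_filt_nested i p : sq i.+1 p -> sq i p.
Proof.
move=> /sq_filtE [p1 p2 p21]; have le : maxn i 1 <= maxn i.+1 1.
  by rewrite geq_max leq_maxr (leq_trans (leqnSn i)) ?leq_maxl.
apply/sq_filtE; split; [exact: Gf_le le p1 | exact: Gf_le le p2 |].
by apply: Gf_le p21; rewrite ltnS.
Qed.

Lemma sq_filt_commg i j p q : sq i p -> sq j q -> sq (i + j) [~ p, q].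
Proof.
move=> /sq_filtE [p1 p2 p21] /sq_filtE [q1 q2 q21].
set a := maxn i 1 in p1 p2 p21; set b := maxn j 1 in q1 q2 q21.
have le_ab : maxn (i + j) 1 <= a + b.
  by rewrite geq_max leq_add ?leq_maxl // (leq_trans (leq_maxr i 1)) // leq_addr.
apply/sq_filtE; rewrite /=; split; try by apply: Gf_le le_ab _; apply: Gf_commg.
apply: (Gf_le (_ : _ <= (a + b).+1)); first by rewrite ltnS.
rewrite -[p.2](mulgVK p.1) -[q.2](mulgVK q.1); set x := p.2 * _; set y := q.2 * _.
have -> : [~ x * p.1, y * q.1] * [~ p.1, q.1]^-1 =
    [~ x, y * q.1] ^ p.1 * ([~ p.1, y] ^ q.1) ^ [~ p.1, q.1]^-1.
  by rewrite /commg /conjg !gnorm.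
apply: GfM; apply: GfJ (Gf_all0 _).
  by rewrite -addSn; apply: Gf_commg p21 (GfM (Gf_nested q21) q1).
by apply: GfJ (Gf_all0 _); rewrite -addnS; apply: Gf_commg p1 q21.
Qed.

Variable s : nat.
Hypothesis Gf_trivial : forall i x, s <= i -> Gf i x -> x = 1.

Lemma sq_filt_trivial i p : maxn s 1 <= i -> sq i p -> p = 1.
Proof.
move=> si /sq_filtE [p1 p2 _]; rewrite (maxn_idPl (leq_trans (leq_maxr s 1) si)) in p1 p2.
have {}si : s <= i by apply: leq_trans si; apply: leq_maxl.
by case: p p1 p2 => a b /= /(Gf_trivial si) -> /(Gf_trivial si) ->.
Qed.

Variable l : nat.

Lemma diffqs_fst K (w : 'rV[int]_l -> prodG G) n :
  (diffqs K w n).1 = diffqs K (fun m => (w m).1) n.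
Proof. by elim: K w => [//|t K IH] w /=; rewrite IH; apply: eq_diffqs. Qed.

Lemma diffqs_snd K (w : 'rV[int]_l -> prodG G) n :
  (diffqs K w n).2 = diffqs K (fun m => (w m).2) n.
Proof. by elim: K w => [//|t K IH] w /=; rewrite IH; apply: eq_diffqs. Qed.

Variable g : 'rV[int]_l -> G.
Hypothesis g_dpoly : is_dpoly Gf 0 g.
Hypothesis g0 : g 0%R = 1.
Local Notation eqmod2 := (eqmodg (Gf 2)).
Let Gf2_commg x y : Gf 2 [~ x, y] := Gf_commg (Gf_all1 x) (Gf_all1 y).
Let eqmod2_refl := eqmodg_refl (Gf_subgroup 2).
Let eqmod2_sym := eqmodg_sym (Gf_subgroup 2).
Let eqmod2_trans := eqmodg_trans (Gf_subgroup 2).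
Let eqmod2M := eqmodgM (Gf_subgroup 2) Gf2_commg.

Lemma eqmod2_g_add_unitv n t : eqmod2 (g n * g (unitv t)) (g (n + unitv t)%R).
Proof.
have dd t' m : Gf 2 (diffq t' (diffq t g) m) by apply: (g_dpoly [:: t; t'] m).
have := filt_diff_shift (Gf_subgroup) dd n 0%R.
by rewrite /eqmodg /diffq !GRing.add0r g0 invg1 mul1g invgM mulgA.
Qed.

Lemma eqmod2_g_lin_add_unitv h t : eqmod2 (g_lin g h * g (unitv t)) (g_lin g (h + unitv t)%R).
Proof.
apply: (eqmodg_prod_mulr (Gf_subgroup 2) Gf2_commg (index_enum_uniq _) (mem_index_enum t)).
  by move=> j /negbTE jt; rewrite add_unitvE jt GRing.addr0.
by rewrite add_unitvE eqxx zexpgD1.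
Qed.

Lemma eqmod2_g_add h n : eqmod2 (g n * g_lin g h) (g (n + h)%R).
Proof.
elim/zvec_ind: h n => [n | h t IH n | h t IH n].
- rewrite GRing.addr0 (_ : g_lin g 0 = 1) ?mulg1 //.
  by rewrite /g_lin big1 // => j _; rewrite mxE.
- apply: (eqmod2_trans (y := g n * g_lin g h * g (unitv t))).
    by rewrite -mulgA; apply: eqmod2M (eqmod2_refl _) _; apply/eqmod2_sym/eqmod2_g_lin_add_unitv.
  apply: (eqmod2_trans (y := g (n + h)%R * g (unitv t))).
    exact: eqmod2M (IH n) (eqmod2_refl _).
  by rewrite GRing.addrA; apply: eqmod2_g_add_unitv.
- apply: (eqmodg_mulIr (Gf_subgroup 2) Gf2_commg (z := g (unitv t))).
  apply: (eqmod2_trans (y := g n * g_lin g h)).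
    rewrite -mulgA; apply: eqmod2M (eqmod2_refl _) _.
    by rewrite -{2}[h](GRing.subrK (unitv t)); apply: eqmod2_g_lin_add_unitv.
  apply: (eqmod2_trans (y := g (n + h)%R)) => //; apply: eqmod2_sym.
  by have := eqmod2_g_add_unitv (n + (h - unitv t))%R t; rewrite -GRing.addrA GRing.subrK.
Qed.

Variables frac intp : G -> G.
Hypothesis frac_intp : forall x, x = frac x * intp x.
Variable h : 'rV[int]_l.
Let a := g_lin g h.

Lemma eqmod2_g_shift n : eqmod2 ((frac a)^-1 * g (n + h)%R * (intp a)^-1) (g n).
Proof.
apply: (eqmod2_trans (y := (g n) ^ frac a)); last exact: eqmodg_conjl.
rewrite (_ : g n ^ frac a = (frac a)^-1 * (g n * a) * (intp a)^-1); last first.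
  by rewrite [X in g n * X](frac_intp a) /conjg !gnorm.
apply: eqmod2M (eqmod2_refl _); apply: eqmod2M (eqmod2_refl _) _.
exact/eqmod2_sym/eqmod2_g_add.
Qed.

Lemma diffqs_g_shift K n y :
  Gf (size K).+1 (diffqs K g n * (diffqs K g (n + h)%R ^ y)^-1).
Proof.
set Dg := diffqs K g.
have FDg m : Gf (size K) (Dg m) by have := g_dpoly K m; rewrite add0n.
have Fe : Gf (size K).+1 ((Dg n)^-1 * Dg (n + h)%R).
  apply: filt_diff_shift => // t' m; have := g_dpoly (rcons K t') m.
  by rewrite add0n size_rcons -cats1 diffqs_cat.
rewrite -[Dg (n + h)%R](mulVKg (Dg n)); set e := _ * Dg (n + h)%R in Fe *.
have -> : Dg n * ((Dg n * e) ^ y)^-1 = (e^-1 ^ y) ^ (Dg n)^-1 * [~ (Dg n)^-1, y].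
  by rewrite /commg /conjg !gnorm.
apply: GfM; first by apply: GfJ (Gf_all0 _); apply: GfJ (Gf_all0 _); apply: GfV.
by rewrite -addn1; apply: Gf_commg (GfV (FDg n)) (Gf_all1 _).
Qed.

Lemma g_shift_dpoly : is_dpoly sq 0 (g_shift frac intp g h).
Proof.
pose w n : prodG G := ((frac a)^-1 * g (n + h)%R * (intp a)^-1, g n).
apply: (@eq_is_dpoly _ _ _ _ w) => [n | K n].
  by rewrite /w /g_shift /g_2 -/a; congr (_, _); rewrite !mulgA mulgVK.
apply/sq_filtE; rewrite diffqs_fst diffqs_snd /w /= add0n.
case: K => [|t K'].
  split; [exact: Gf_all1 | exact: Gf_all1 |].
  exact/(eqmodg_divr (Gf_subgroup 2) Gf2_commg)/eqmod2_g_shift.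
rewrite (maxn_idPl (isT : 1 <= size (t :: K'))).
rewrite (@diffqs_mul_const _ _ (t :: K') (fun m => g (m + h)%R)) // diffqs_shift.
have FDg m : Gf (size (t :: K')) (diffqs (t :: K') g m).
  by have := g_dpoly (t :: K') m; rewrite add0n.
by split; [exact: GfJ (FDg _) (Gf_all0 _) | exact: FDg | exact: diffqs_g_shift].
Qed.

End SquareFiltration.

Theorem lemmal (G : groupType) (Gamma : G -> Prop) (frac intp : G -> G)
    (Gf : nat -> G -> Prop) (l : nat) (g : 'rV[int]_l -> G) (h : 'rV[int]_l) :
  is_subgroup Gamma ->
  (forall x, x = (frac x * intp x)%g /\ Gamma (intp x)) ->
  is_filtration Gf ->
  is_poly Gf g ->
  g 0%R = 1%g ->
  is_poly (sq_filt Gf) (g_shift frac intp g h).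
Proof.
move=> _ frac_intp [Gf_sub [_ [Gf_all1 [Gf_nested [Gf_commg [s Gf_triv]]]]]] g_poly g0.
have frac_intpE x : x = (frac x * intp x)%g by case: (frac_intp x).
apply: (is_dpoly_poly (sq_filt_subgroup Gf_sub Gf_all1 Gf_nested Gf_commg)
          (sq_filt_nested Gf_all1 Gf_nested) (sq_filt_commg Gf_sub Gf_all1 Gf_nested Gf_commg)
          (sq_filt_trivial Gf_all1 Gf_triv) _ (leqnn (maxn s 1))).
apply: (g_shift_dpoly Gf_sub Gf_all1 Gf_nested Gf_commg _ g0 frac_intpE).
exact: is_poly_dpoly g_poly.
Qed.
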